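(* Let $(A,\succ,\prec)$ be an anti-pre-Novikov algebra and $s\in A\otimes A$ define a factorizable anti-pre-Novikov bialgebra $(A,\succ,\prec,\Delta_{\succ,s},\Delta_{\prec,s})$. Consider the direct sum anti-pre-Novikov algebra $A\oplus A$ (componentwise operations) and the linear map $T_s\oplus T_{\tau(s)}:A^*\to A\oplus A$, $\zeta\mapsto(T_s(\zeta),-T_{\tau(s)}(\zeta))$. Then $\mathrm{Im}(T_s\oplus T_{\tau(s)})$ is an anti-pre-Novikov subalgebra of $A\oplus A$ isomorphic to the anti-pre-Novikov algebra $(A^*,\succ_s,\prec_s)$. Furthermore, every $x\in A$ has a unique decomposition $x=x_1-x_2$ with $(x_1,x_2)\in\mathrm{Im}(T_s\oplus T_{\tau(s)})$.
   Context: $A$ is finite-dimensional over a field $k$. An anti-pre-Novikov algebra is $(A,\succ,\prec)$ such that with $x\circ y=x\succ y+x\prec y$: $(x\circ y-y\circ x)\succ z=y\succ(x\succ z)-x\succ(y\succ z)$; $x\prec(y\circ z)=(y\succ x)\prec z-(x\prec y)\prec z-y\succ(x\prec z)$; $(x\circ y)\succ z=-(x\succ z)\prec y$; $(x\prec y)\prec z=(x\prec z)\prec y$; $(x\circ y-y\circ x)\prec z=x\succ(y\circ z)-y\succ(x\circ z)$. Notation: $x\odot y=x\succ y+y\prec x$; $L_\ast(x)y=x\ast y$, $R_\ast(x)y=y\ast x$; $L_{\star}=L_{\circ}+R_{\circ}$, $L_{\odot}=L_{\succ}+R_{\prec}$, $R_{\odot}=R_{\succ}+L_{\prec}$; for $f:A\to\mathrm{End}(A)$,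 $\langle f^*(x)\zeta,y\rangle=-\langle\zeta,f(x)y\rangle$; $\tau$ is the flip; $T_r:A^*\to A$, $\langle T_r(\zeta),\eta\rangle=\langle r,\zeta\otimes\eta\rangle$. $r$ is invariant if $(I\otimes L_{\star}(x)-L_{\succ}(x)\otimes I)r=0$ and $(L_{\circ}(x)\otimes I-I\otimes L_{\odot}(x))r=0$ for all $x$. For $s=\sum_i a_i\otimes b_i$ the APN-YBE is $\sum_{i,j}a_i\circ a_j\otimes b_i\otimes b_j+\sum_{i,j}a_j\otimes a_i\otimes(b_i\odot b_j)+\sum_{i,j}a_i\otimes(b_i\prec a_j)\otimes b_j=0$. With $\Delta_{\succ,s}(x)=(I\otimes L_{\star}(x)-L_{\succ}(x)\otimes I)s$, $\Delta_{\prec,s}(x)=(L_{\circ}(x)\otimes I-I\otimes L_{\odot}(x))s$, the datum $(A,\succ,\prec,\Delta_{\succ,s},\Delta_{\prec,s})$ is a factorizable anti-pre-Novikov bialgebra when $s$ solves the APN-YBE, $s+\tau(s)$ is invariant and $T_{s+\tau(s)}$ is a linear isomorphism. The operations on $A^*$ dual to $\Delta_{\succ,s},\Delta_{\prec,s}$ are $\zeta\succ_s\eta=R_{\succ}^*(T_{\tau(s)}(\eta))\zeta-L_{\star}^*(T_s(\zeta))\eta$ and $\zeta\prec_s\eta=R_{\odot}^*(T_s(\zeta))\eta-R_{\circ}^*(T_{\tau(s)}(\eta))\zeta$. *)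

(* A finite-dimensional space A over a field K is modelled
   as K^n = 'rV[K]_n with standard basis e_0..e_{n-1}; A^* is also 'rV[K]_n
   via the dual basis, with pairing <zeta, x> = \sum_i zeta_i x_i.
   A 2-tensor r = \sum_{p,q} r_pq e_p (x) e_q is the matrix r : 'M[K]_n. *)
From HB Require Import structures.
From mathcomp Require Import all_boot all_order all_algebra.
Set Implicit Arguments. Unset Strict Implicit. Unset Printing Implicit Defensive.
Import Order.TTheory GRing.Theory Num.Theory.
Local Open Scope ring_scope.

Section APN.
Variables (K : fieldType) (n : nat).
Local Notation V := 'rV[K]_n.

Definition ebas (p : 'I_n) : V := delta_mx 0 p.

Definition bil (c : 'I_n -> 'I_n -> V) (x y : V) : V :=
  \sum_i \sum_j (x 0 i * y 0 j) *: c i j.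

Variables (suc prec : V -> V -> V).

Definition circ (x y : V) : V := suc x y + prec x y.
Definition odot (x y : V) : V := suc x y + prec y x.

Definition is_APN : Prop :=
  forall x y z : V,
  [/\ suc (circ x y - circ y x) z = suc y (suc x z) - suc x (suc y z),
      prec x (circ y z) = prec (suc y x) z - prec (prec x y) z - suc y (prec x z),
      suc (circ x y) z = - prec (suc x z) y,
      prec (prec x y) z = prec (prec x z) y
    & prec (circ x y - circ y x) z = suc x (circ y z) - suc y (circ x z)].

Definition Lstar (x : V) : V -> V := fun y => circ x y + circ y x.
Definition Lodot (x : V) : V -> V := fun y => suc x y + prec y x.
Definition Rsuc (x : V) : V -> V := fun y => suc y x.
Definition Rcirc (x : V) : V -> V := fun y => circ y x.
Definition Rodot (x : V) : V -> V := fun y => suc y x + prec x y.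

Definition tens2 (x y : V) : 'M[K]_n := x^T *m y.
(* (f (x) g) r for r = \sum r_pq e_p (x) e_q *)
Definition app2 (f g : V -> V) (r : 'M[K]_n) : 'M[K]_n :=
  \sum_p \sum_q r p q *: tens2 (f (ebas p)) (g (ebas q)).

Definition invariant (r : 'M[K]_n) : Prop :=
  forall x : V,
    app2 id (Lstar x) r - app2 (suc x) id r = 0 /\
    app2 (circ x) id r - app2 id (Lodot x) r = 0.

Definition tens3 (x y z : V) : {ffun 'I_n * 'I_n * 'I_n -> K} :=
  [ffun t => x 0 t.1.1 * y 0 t.1.2 * z 0 t.2].

(* APN-YBE for s = \sum_{(p,q)} a_(p,q) (x) b_(p,q), a_(p,q) = s_pq e_p, b_(p,q) = e_q *)
Definition APN_YBE (s : 'M[K]_n) : Prop :=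
  \sum_(i : 'I_n * 'I_n) \sum_(j : 'I_n * 'I_n)
    (let ai := s i.1 i.2 *: ebas i.1 in let bi := ebas i.2 in
     let aj := s j.1 j.2 *: ebas j.1 in let bj := ebas j.2 in
     tens3 (circ ai aj) bi bj + tens3 aj ai (odot bi bj)
       + tens3 ai (prec bi aj) bj) = 0.

(* T_r : A^* -> A, <T_r zeta, eta> = <r, zeta (x) eta>; in coordinates zeta *m r *)
Definition Tmap (r : 'M[K]_n) (zeta : V) : V := zeta *m r.

Definition pair (zeta x : V) : K := \sum_i zeta 0 i * x 0 i.

(* f^*(x) zeta, characterised by <f^*(x) zeta, y> = - <zeta, f(x) y> *)
Definition dualop (f : V -> V -> V) (x zeta : V) : V :=
  \row_j (- pair zeta (f x (ebas j))).

Definition factorizable (s : 'M[K]_n) : Prop :=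
  [/\ APN_YBE s, invariant (s + s^T) & bijective (Tmap (s + s^T))].

Definition suc_s (s : 'M[K]_n) (zeta eta : V) : V :=
  dualop Rsuc (Tmap s^T eta) zeta - dualop Lstar (Tmap s zeta) eta.
Definition prec_s (s : 'M[K]_n) (zeta eta : V) : V :=
  dualop Rodot (Tmap s zeta) eta - dualop Rcirc (Tmap s^T eta) zeta.

Definition dsuc (u v : V * V) : V * V := (suc u.1 v.1, suc u.2 v.2).
Definition dprec (u v : V * V) : V * V := (prec u.1 v.1, prec u.2 v.2).

Definition Tpair (s : 'M[K]_n) (zeta : V) : V * V := (Tmap s zeta, - Tmap s^T zeta).

Definition in_image (s : 'M[K]_n) (u : V * V) : Prop := exists zeta, Tpair s zeta = u.

End APN.

From Pilot Require Import Defs.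
From HB Require Import structures.
From mathcomp Require Import all_boot all_order all_algebra.
From mathcomp Require Import ring.
Set Implicit Arguments. Unset Strict Implicit. Unset Printing Implicit Defensive.
Import GRing.Theory.
Local Open Scope ring_scope.

(* Write S := T_s, S' := T_tau(s) and I := S + S' = T_(s + tau(s)).  Pairing the
   APN-YBE with zeta (x) eta (x) theta, and the two invariance conditions on
   s + tau(s) with zeta (x) eta, turns them into scalar identities between terms
   such as <zeta, S' eta o S' theta>.  Since I is onto, any S eta or S' eta in
   argument position can be written as I xi, and suitable linear combinations of
   these identities show that S and -S' are homomorphisms from
   (A^*, >-_s, -<_s) to A.  Hence zeta |-> (S zeta, -S' zeta) is a homomorphism
   onto its image; it is injective because the difference of its components is
   I zeta, and x = x1 - x2 is realised by zeta = I^-1 x. *)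

Lemma linear_for_sumZ (R : pzRingType) (U : lmodType R) (W : zmodType)
    (s : GRing.Scale.law R W) (f : U -> W) (I : Type) (r : seq I) (c : I -> R) (x : I -> U) :
  linear_for s f -> f (\sum_(i <- r) c i *: x i) = \sum_(i <- r) s (c i) (f (x i)).
Proof.
move=> fL; pose F : {linear U -> W | s} := HB.pack f (GRing.isLinear.Build _ _ _ s f fL).
transitivity (\sum_(i <- r) F (c i *: x i)).
  exact: (linear_sum F r xpredT (fun i => c i *: x i)).
by apply: eq_bigr => i _; exact: linearZ_LR.
Qed.

Lemma scalar2_sumZ (R : pzRingType) (U U' : lmodType R) (f : U -> U' -> R)
    (I J : Type) (ri : seq I) (rj : seq J) (c : I -> R) (x : I -> U) (d : J -> R) (y : J -> U') :
  (forall v, scalar (f ^~ v)) -> (forall u, scalar (f u)) ->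
  f (\sum_(i <- ri) c i *: x i) (\sum_(j <- rj) d j *: y j)
    = \sum_(i <- ri) \sum_(j <- rj) c i * d j * f (x i) (y j).
Proof.
move=> fl fr; rewrite (linear_for_sumZ _ _ _ (fl _)); apply: eq_bigr => i _.
by rewrite /= (linear_for_sumZ _ _ _ (fr _)) mulr_sumr; apply: eq_bigr => j _; rewrite mulrA.
Qed.

Lemma linear_add (R : pzRingType) (U W : lmodType R) (f g : U -> W) :
  linear f -> linear g -> linear (fun u => f u + g u).
Proof. by move=> fL gL a u v; rewrite fL gL scalerDr addrACA. Qed.

(* The pairing identities below are proved as explicit linear combinations of
   earlier ones: [apply: (eq_up_to_multiple c h)] adds [c] times the identity
   [h] to the goal, and [ring] closes what remains once everything has been
   expanded by bilinearity. *)
Lemma eq_up_to_multiple (R : pzRingType) (L M A B c : R) :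
  A = B -> L = M + c * (A - B) -> L = M.
Proof. by move=> -> ->; rewrite subrr mulr0 addr0. Qed.
Arguments eq_up_to_multiple {R L M A B} c.

Section Pairing.
Variables (K : fieldType) (n : nat).
Local Notation V := 'rV[K]_n.

Fact pair_is_bilinear : bilinear_for *%R *%R (@pair K n).
Proof.
split=> [y a u v | x a u v]; rewrite /pair /= mulr_sumr -big_split /=;
  by apply: eq_bigr => i _; rewrite !mxE; ring.
Qed.

HB.instance Definition _ :=
  bilinear_isBilinear.Build K V V K *%R *%R (@pair K n) pair_is_bilinear.

Lemma pairE (z x : V) : pair z x = (z *m x^T) 0 0.
Proof. by rewrite mxE; apply: eq_bigr => i _; rewrite mxE. Qed.

Lemma pairC (z x : V) : pair z x = pair x z.
Proof. by apply: eq_bigr => i _; rewrite mulrC. Qed.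

Lemma pair_ebas (x : V) p : pair x (ebas K p) = x 0 p.
Proof.
rewrite /pair (bigD1 p) //= big1 => [|i ip]; rewrite /ebas mxE.
  by rewrite !eqxx mulr1 addr0.
by rewrite (negbTE ip) andbF mulr0.
Qed.

Lemma pair_nondegenerate (x y : V) : (forall z, pair z x = pair z y) -> x = y.
Proof. by move=> xy; apply/rowP => j; rewrite -!(pair_ebas _ j) !(pairC _ (ebas K j)). Qed.

Lemma Tmap_adjoint (r : 'M[K]_n) (z w : V) : pair w (Tmap r z) = pair z (Tmap r^T w).
Proof.
rewrite !pairE /Tmap !trmx_mul trmxK !mulmxA.
have -> : z *m r *m w^T = (w *m r^T *m z^T)^T by rewrite !trmx_mul !trmxK mulmxA.
by rewrite [RHS]mxE.
Qed.

Lemma linear_row_expand (f : V -> V) (v : V) :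
  linear f -> f v = \sum_j v 0 j *: f (ebas K j).
Proof. by move=> fL; rewrite {1}(row_sum_delta v) (linear_for_sumZ _ _ _ fL). Qed.

Lemma pair_dualop (f : V -> V -> V) (x z y : V) :
  linear (f x) -> pair (dualop f x z) y = - pair z (f x y).
Proof.
move=> fL; rewrite [in RHS](linear_row_expand y fL) linear_sumr -sumrN.
by apply: eq_bigr => j _; rewrite !mxE linearZr_LR /=; ring.
Qed.

Lemma TmapD (r1 r2 : 'M[K]_n) (z : V) : Tmap (r1 + r2) z = Tmap r1 z + Tmap r2 z.
Proof. exact: mulmxDr. Qed.

Lemma Tmap_tensor_sum (s : 'M[K]_n) (z : V) :
  Tmap s z = \sum_(i : 'I_n * 'I_n) pair z (s i.1 i.2 *: ebas K i.1) *: ebas K i.2.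
Proof.
rewrite {1}(row_sum_delta (Tmap s z)).
under eq_bigr do rewrite /Tmap mxE scaler_suml.
rewrite exchange_big pair_bigA; apply: eq_bigr => -[p q] _ /=.
by rewrite linearZr_LR /= pair_ebas mulrC.
Qed.

Lemma Tmap_tr_tensor_sum (s : 'M[K]_n) (z : V) :
  Tmap s^T z = \sum_(i : 'I_n * 'I_n) pair z (ebas K i.2) *: (s i.1 i.2 *: ebas K i.1).
Proof.
rewrite {1}(row_sum_delta (Tmap s^T z)).
under eq_bigr do rewrite /Tmap mxE scaler_suml.
rewrite pair_bigA; apply: eq_bigr => -[p q] _ /=.
by rewrite pair_ebas scalerA !mxE mulrC.
Qed.

Lemma Tmap_tens2 (x y z : V) : Tmap (tens2 x y) z = pair z x *: y.
Proof. by rewrite /Tmap /tens2 mulmxA [z *m _]mx11_scalar mul_scalar_mx pairE. Qed.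

Lemma Tmap_app2 (f g : V -> V) (r : 'M[K]_n) (z : V) :
  Tmap (app2 f g r) z = \sum_p \sum_q (r p q * pair z (f (ebas K p))) *: g (ebas K q).
Proof.
rewrite /Tmap /app2 mulmx_sumr; apply: eq_bigr => p _.
rewrite mulmx_sumr; apply: eq_bigr => q _.
by rewrite -scalemxAr -/(Tmap _ z) Tmap_tens2 scalerA.
Qed.

Lemma Tmap_app2_idl (g : V -> V) (r : 'M[K]_n) (z : V) :
  linear g -> Tmap (app2 id g r) z = g (Tmap r z).
Proof.
move=> gL; rewrite Tmap_app2 exchange_big [RHS](linear_row_expand _ gL).
apply: eq_bigr => q _; rewrite -scaler_suml !mxE; congr (_ *: _).
by apply: eq_bigr => p _; rewrite pair_ebas mulrC.
Qed.

Lemma Tmap_app2_idr (f : V -> V -> V) (x : V) (r : 'M[K]_n) (z : V) :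
  Tmap (app2 (f x) id r) z = - Tmap r (dualop f x z).
Proof.
apply/rowP => j; rewrite Tmap_app2 !mxE summxE -sumrN; apply: eq_bigr => p _.
rewrite summxE (bigD1 j) //= big1 => [|q qj]; rewrite !mxE.
  by rewrite !eqxx mulr1 addr0; ring.
by rewrite eq_sym (negbTE qj) andbF mulr0.
Qed.

Definition eval3 (z w u : V) (F : {ffun 'I_n * 'I_n * 'I_n -> K}) : K :=
  \sum_t F t * (z 0 t.1.1 * w 0 t.1.2 * u 0 t.2).

Fact eval3_is_zmod_morphism (z w u : V) : zmod_morphism (eval3 z w u).
Proof.
move=> F G; rewrite /eval3 -sumrB /=.
by apply: eq_bigr => t _; rewrite !ffunE mulrBl.
Qed.

HB.instance Definition _ (z w u : V) :=
  GRing.isZmodMorphism.Build _ K (eval3 z w u) (eval3_is_zmod_morphism z w u).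

Lemma eval3_tens3 (x y v z w u : V) :
  eval3 z w u (tens3 x y v) = pair z x * pair w y * pair u v.
Proof.
rewrite /eval3 /pair big_distrlr /= mulr_suml.
under [RHS]eq_bigr do rewrite mulr_suml.
rewrite pair_bigA /=; under [RHS]eq_bigr do rewrite mulr_sumr.
by rewrite pair_bigA /=; apply: eq_bigr => t _; rewrite ffunE /=; ring.
Qed.

End Pairing.

Section Operators.
Variables (K : fieldType) (n : nat) (suc prec : {bilinear 'rV[K]_n -> 'rV[K]_n -> 'rV[K]_n}).
Local Notation V := 'rV[K]_n.
Local Notation circ := (circ suc prec).
Local Notation odot := (odot suc prec).

Lemma circ_linearr x : linear (circ x).
Proof. exact: linear_add (linearPr suc x) (linearPr prec x). Qed.

Lemma Rcirc_linear x : linear (Rcirc suc prec x).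
Proof. exact: linear_add (linearPl suc x) (linearPl prec x). Qed.

Lemma Lodot_linear x : linear (Lodot suc prec x).
Proof. exact: linear_add (linearPr suc x) (linearPl prec x). Qed.

Lemma Rodot_linear x : linear (Rodot suc prec x).
Proof. exact: linear_add (linearPl suc x) (linearPr prec x). Qed.

Lemma Lstar_linear x : linear (Lstar suc prec x).
Proof. exact: linear_add (circ_linearr x) (Rcirc_linear x). Qed.

Lemma scalar_pair_comp (z : V) (g : V -> V) : linear g -> scalar (fun v => pair z (g v)).
Proof. by move=> gL a u v; rewrite gL linearPr. Qed.

Ltac bilinear_expand :=
  rewrite /Lstar /Lodot /Rodot /Rcirc /Rsuc /Defs.circ /Defs.odot /=;
  rewrite ?(linearDl, linearDr, linearNl, linearNr, opprD, opprK) /=.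

Section Invariance.
Variable r : 'M[K]_n.
Hypotheses (r_sym : r^T = r) (r_inv : Defs.invariant suc prec r).
Local Notation I := (Tmap r).

Lemma invariant_Lstar_suc x z w : pair w (Lstar suc prec x (I z)) = pair z (suc x (I w)).
Proof.
move/eqP: (r_inv x).1; rewrite subr_eq0 => /eqP /(congr1 (fun m => Tmap m z)) /=.
rewrite (Tmap_app2_idl _ _ (Lstar_linear x)) Tmap_app2_idr => ->.
by rewrite linearNr /= Tmap_adjoint (pair_dualop _ _ (linearPr suc x)) r_sym opprK.
Qed.

Lemma invariant_circ_Lodot x z w : pair z (circ x (I w)) = pair w (Lodot suc prec x (I z)).
Proof.
move/eqP: (r_inv x).2; rewrite subr_eq0 => /eqP /(congr1 (fun m => Tmap m z)) /=.
rewrite (Tmap_app2_idl _ _ (Lodot_linear x)) Tmap_app2_idr => <-.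
by rewrite linearNr /= Tmap_adjoint (pair_dualop _ _ (circ_linearr x)) r_sym opprK.
Qed.

Lemma invariant_circ_prec x z w : pair w (circ (I z) x) + pair z (prec (I w) x) = 0.
Proof.
apply: (eq_up_to_multiple 1 (invariant_Lstar_suc x z w)).
apply: (eq_up_to_multiple (-1) (invariant_circ_Lodot x w z)).
bilinear_expand; ring.
Qed.

Lemma invariant_odot_prec o z g : pair z (odot (I g) (I o)) + pair g (prec (I o) (I z)) = 0.
Proof.
apply: (eq_up_to_multiple 1 (invariant_circ_prec (I g) z o)).
apply: (eq_up_to_multiple 1 (invariant_circ_prec (I z) g o)).
apply: (eq_up_to_multiple (-1) (invariant_Lstar_suc (I g) z o)).
bilinear_expand; ring.
Qed.

Lemma invariant_suc_swap o z g : pair z (suc (I g) (I o)) = pair g (suc (I z) (I o)).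
Proof.
apply: (eq_up_to_multiple (-1) (invariant_Lstar_suc (I g) z o)).
apply: (eq_up_to_multiple 1 (invariant_Lstar_suc (I z) g o)).
bilinear_expand; ring.
Qed.

End Invariance.

Section Factorizable.
Variable s : 'M[K]_n.
Local Notation S := (Tmap s).
Local Notation S' := (Tmap s^T).
Local Notation I := (Tmap (s + s^T)).

Hypotheses (s_ybe : APN_YBE suc prec s) (s_inv : Defs.invariant suc prec (s + s^T))
  (s_onto : forall y : V, exists o, I o = y).

Lemma ybe_pairing (z w u : V) :
  pair z (circ (S' w) (S' u)) + pair u (odot (S w) (S z)) + pair w (prec (S z) (S' u)) = 0.
Proof.
have := congr1 (eval3 z w u) s_ybe; rewrite raddf0 raddf_sum => <-.
under [RHS]eq_bigr => i _ do
  (rewrite raddf_sum; under eq_bigr => j _ do rewrite !raddfD /= !eval3_tens3).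
under [RHS]eq_bigr do rewrite !big_split; rewrite !big_split /=.
congr (_ + _ + _).
- rewrite (Tmap_tr_tensor_sum s w) (Tmap_tr_tensor_sum s u).
  rewrite (scalar2_sumZ (f := fun a b => pair z (circ a b))) /=.
  + by apply: eq_bigr => i _; apply: eq_bigr => j _; ring.
  + by move=> v; apply: scalar_pair_comp (Rcirc_linear v).
  + by move=> v; apply: scalar_pair_comp (circ_linearr v).
- rewrite (Tmap_tensor_sum s w) (Tmap_tensor_sum s z).
  rewrite (scalar2_sumZ (f := fun a b => pair u (odot a b))) /=.
  + by apply: eq_bigr => i _; apply: eq_bigr => j _; ring.
  + by move=> v; apply: scalar_pair_comp (Rodot_linear v).
  + by move=> v; apply: scalar_pair_comp (Lodot_linear v).
- rewrite (Tmap_tensor_sum s z) (Tmap_tr_tensor_sum s u).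
  rewrite (scalar2_sumZ (f := fun a b => pair w (prec a b))) /=.
  + by apply: eq_bigr => i _; apply: eq_bigr => j _; ring.
  + by move=> v; apply: scalar_pair_comp (linearPl prec v).
  + by move=> v; apply: scalar_pair_comp (linearPr prec v).
Qed.

Lemma tr_sym_sum : (s + s^T)^T = s + s^T.
Proof. by rewrite linearD /= trmxK addrC. Qed.

Let invariant_Lstar_suc := invariant_Lstar_suc tr_sym_sum s_inv.
Let invariant_circ_prec := invariant_circ_prec tr_sym_sum s_inv.
Let invariant_odot_prec := invariant_odot_prec tr_sym_sum s_inv.
Let invariant_suc_swap := invariant_suc_swap tr_sym_sum s_inv.

Lemma Tmap_suc_s z w : S (suc_s suc prec s z w) = suc (S z) (S w).
Proof.
apply: pair_nondegenerate => g; rewrite Tmap_adjoint /suc_s linearDl linearNl /=.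
rewrite (pair_dualop _ _ (linearPl suc _)) (pair_dualop _ _ (Lstar_linear _)).
have [o Io] := s_onto (S w).
have odot_prec := invariant_odot_prec o z g; rewrite Io in odot_prec.
apply: (eq_up_to_multiple 1 (invariant_Lstar_suc (S' g) z w)).
apply: (eq_up_to_multiple (-1) (ybe_pairing w g z)).
apply: (eq_up_to_multiple (-1) (ybe_pairing w z g)).
apply: (eq_up_to_multiple 1 odot_prec).
rewrite !TmapD; bilinear_expand; ring.
Qed.

Lemma Tmap_prec_s z w : S (prec_s suc prec s z w) = prec (S z) (S w).
Proof.
apply: pair_nondegenerate => g; rewrite Tmap_adjoint /prec_s linearDl linearNl /=.
rewrite (pair_dualop _ _ (Rodot_linear _)) (pair_dualop _ _ (Rcirc_linear _)).
have [o Io] := s_onto (S z).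
have odot_prec := invariant_odot_prec o w g; rewrite Io in odot_prec.
apply: (eq_up_to_multiple 1 (ybe_pairing z g w)).
apply: (eq_up_to_multiple (-1) odot_prec).
rewrite !TmapD; bilinear_expand; ring.
Qed.

Lemma pair_opp_Tmap_tr t g : pair g (- S' t) = pair t (S' g) - pair t (I g).
Proof. by rewrite linearNr /= Tmap_adjoint trmxK TmapD linearDr /=; ring. Qed.

Lemma Tmap_tr_suc_s z w : - S' (suc_s suc prec s z w) = suc (- S' z) (- S' w).
Proof.
apply: pair_nondegenerate => g; rewrite pair_opp_Tmap_tr -Tmap_adjoint Tmap_suc_s.
rewrite /suc_s linearDl linearNl /=.
rewrite (pair_dualop _ _ (linearPl suc _)) (pair_dualop _ _ (Lstar_linear _)).
have [o Io] := s_onto (S' w).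
have suc_swap := invariant_suc_swap o z g; rewrite Io in suc_swap.
apply: (eq_up_to_multiple (-1) (invariant_Lstar_suc (S z) g w)).
apply: (eq_up_to_multiple 1 suc_swap).
rewrite !TmapD; bilinear_expand; ring.
Qed.

Lemma Tmap_tr_prec_s z w : - S' (prec_s suc prec s z w) = prec (- S' z) (- S' w).
Proof.
apply: pair_nondegenerate => g; rewrite pair_opp_Tmap_tr -Tmap_adjoint Tmap_prec_s.
rewrite /prec_s linearDl linearNl /=.
rewrite (pair_dualop _ _ (Rodot_linear _)) (pair_dualop _ _ (Rcirc_linear _)).
have [o Io] := s_onto (S z).
have odot_prec := invariant_odot_prec o w g; rewrite Io in odot_prec.
apply: (eq_up_to_multiple 1 odot_prec).
apply: (eq_up_to_multiple (-1) (invariant_circ_prec (S' w) g z)).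
rewrite !TmapD; bilinear_expand; ring.
Qed.

Lemma Tpair_suc_s z w : Tpair s (suc_s suc prec s z w) = dsuc suc (Tpair s z) (Tpair s w).
Proof. by rewrite /Tpair /dsuc /= Tmap_suc_s Tmap_tr_suc_s. Qed.

Lemma Tpair_prec_s z w : Tpair s (prec_s suc prec s z w) = dprec prec (Tpair s z) (Tpair s w).
Proof. by rewrite /Tpair /dprec /= Tmap_prec_s Tmap_tr_prec_s. Qed.

End Factorizable.
End Operators.

Fact bil_is_bilinear (K : fieldType) (n : nat) (c : 'I_n -> 'I_n -> 'rV[K]_n) :
  bilinear_for *:%R *:%R (bil c).
Proof.
split=> [y a u v | x a u v]; rewrite /bil /= scaler_sumr -big_split /=;
  apply: eq_bigr => i _; rewrite scaler_sumr -big_split /=; apply: eq_bigr => j _.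
  by rewrite !mxE mulrDl scalerDl scalerA mulrA.
by rewrite !mxE mulrDr scalerDl scalerA mulrCA.
Qed.

HB.instance Definition _ (K : fieldType) (n : nat) (c : 'I_n -> 'I_n -> 'rV[K]_n) :=
  bilinear_isBilinear.Build K 'rV[K]_n 'rV[K]_n 'rV[K]_n *:%R *:%R (bil c) (bil_is_bilinear c).

Lemma Tpair_sub (K : fieldType) (n : nat) (s : 'M[K]_n) (z : 'rV[K]_n) :
  (Tpair s z).1 - (Tpair s z).2 = Tmap (s + s^T) z.
Proof. by rewrite opprK TmapD. Qed.

Lemma Tpair_linear (K : fieldType) (n : nat) (s : 'M[K]_n) (a : K) (z w : 'rV[K]_n) :
  Tpair s (a *: z + w) = (a *: (Tpair s z).1 + (Tpair s w).1, a *: (Tpair s z).2 + (Tpair s w).2).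
Proof. by rewrite /Tpair /Tmap /= !mulmxDl opprD scalerN -!scalemxAl. Qed.

Unset Implicit Arguments.
Set Strict Implicit.

Theorem mainTheorem18 (K : fieldType) (n : nat)
    (csuc cprec : 'I_n -> 'I_n -> 'rV[K]_n) (s : 'M[K]_n) :
  let suc := bil csuc in
  let prec := bil cprec in
  is_APN suc prec ->
  factorizable suc prec s ->
  (* Im(T_s (+) T_tau(s)) is an anti-pre-Novikov subalgebra of A (+) A *)
  (forall u v, in_image s u -> in_image s v ->
     in_image s (dsuc suc u v) /\ in_image s (dprec prec u v)) /\
  (* ... isomorphic to (A^*, suc_s, prec_s) *)
  (exists psi : 'rV[K]_n -> 'rV[K]_n * 'rV[K]_n,
     [/\ forall (a : K) (z w : 'rV[K]_n), psi (a *: z + w) = (a *: (psi z).1 + (psi w).1, a *: (psi z).2 + (psi w).2),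
         injective psi,
         forall u, in_image s u <-> exists z, psi z = u,
         forall z w, psi (suc_s suc prec s z w) = dsuc suc (psi z) (psi w)
       & forall z w, psi (prec_s suc prec s z w) = dprec prec (psi z) (psi w)]) /\
  (* unique decomposition x = x1 - x2 with (x1, x2) in the image *)
  (forall x : 'rV[K]_n, exists! u : 'rV[K]_n * 'rV[K]_n,
     in_image s u /\ x = u.1 - u.2).
Proof.
move=> suc prec _ [ybe inv [Iinv IK KI]].
have onto y : exists o, Tmap (s + s^T) o = y := ex_intro _ _ (KI y).
have hsuc := Tpair_suc_s ybe inv onto; have hprec := Tpair_prec_s ybe inv onto.
split; [|split].
- move=> _ _ [z <-] [w <-]; split.
    by exists (suc_s suc prec s z w); rewrite hsuc.
  by exists (prec_s suc prec s z w); rewrite hprec.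
- exists (Tpair s); split; [exact: Tpair_linear | | by [] | exact: hsuc | exact: hprec].
  by move=> z w zw; rewrite -[z]IK -[w]IK -!Tpair_sub zw.
- move=> x; exists (Tpair s (Iinv x)); split.
    by split; [exists (Iinv x) | rewrite Tpair_sub KI].
  by move=> _ [[z <-] ->]; rewrite Tpair_sub IK.
Qed.
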